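(* Let $\alpha,\beta,\varepsilon>0$, $r\in\mathbb{N}$, $S\subseteq\mathbb{N}$ an infinite set, $\mathcal{A}=\mathcal{A}(n)$ and $X=X(n)$ graph properties (events in $G(n,p)$), and $p=p(n)$ with $p=\Theta(1/n)$, such that for every $n\in S$, $\Pr[X]>\beta$ and $\Pr[\mathcal{A}\mid X]>\alpha$ (probabilities in $G(n,p)$). For every integer $i\ge 0$ let $B_i$ be the event that the graph on $\{1,\dots,n\}$ satisfies: (1) there are exactly $i$ edges between $\{1,\dots,r\}$ and $\{r+1,\dots,n\}$; (2) there is no edge joining two vertices of $\{1,\dots,r\}$; (3) no vertex of $\{r+1,\dots,n\}$ has more than one neighbour in $\{1,\dots,r\}$. Then there exists $i\ge 0$ such that $\Pr[\mathcal{A}\mid B_i\cap X]>\alpha-\varepsilon$ for infinitely many $n\in S$.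
   Context: $G(n,p)$ denotes the random graph on vertex set $\{1,\dots,n\}$ in which each possible edge appears independently with probability $p=p(n)$. *)

From mathcomp Require Import all_boot.
From Stdlib Require Import Reals.
Set Implicit Arguments. Unset Strict Implicit. Unset Printing Implicit Defensive.

(* Vertex set {1,...,n} is modelled as 'I_n (vertex k+1 of the paper is k).
   A graph on 'I_n is a set of ordered pairs (u,v) with u < v (each edge once). *)
Definition graph (n : nat) := {set 'I_n * 'I_n}.

Definition Kn (n : nat) : graph n := [set e : 'I_n * 'I_n | (e.1 < e.2)%N].

Definition adj (n : nat) (G : graph n) (u v : 'I_n) : bool :=
  ((u, v) \in G) || ((v, u) \in G).

Definition event := forall n : nat, graph n -> bool.

Definition gnp_weight (n : nat) (p : R) (G : graph n) : R :=
  (p ^ #|G| * (1 - p) ^ (#|Kn n| - #|G|))%R.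

Definition Pr (n : nat) (p : R) (E : graph n -> bool) : R :=
  \big[Rplus/0%R]_(G : graph n | (G \subset Kn n) && E G) gnp_weight p G.

Definition andE (n : nat) (E F : graph n -> bool) : graph n -> bool :=
  fun G => E G && F G.

Definition CPr (n : nat) (p : R) (E F : graph n -> bool) : R :=
  (Pr p (andE E F) / Pr p F)%R.

(* lower vertices {1,...,r} of the paper = indices < r *)
Definition low (r n : nat) (v : 'I_n) : bool := (v < r)%N.

Definition B (r i n : nat) (G : graph n) : bool :=
  [&& #|[set e in G | low r e.1 != low r e.2]| == i,
      [forall e in G, ~~ (low r e.1 && low r e.2)] &
      [forall v : 'I_n, ~~ low r v ==>
         (#|[set u : 'I_n | low r u && adj G u v]| <= 1)%N]].

Definition Theta_inv_n (p : nat -> R) : Prop :=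
  exists c C : R, (0 < c)%R /\ (0 < C)%R /\ exists N : nat, forall n : nat, (N <= n)%N ->
    (c / INR n <= p n <= C / INR n)%R.

Definition infinite_set (S : nat -> Prop) : Prop :=
  forall m : nat, exists n : nat, (m <= n)%N /\ S n.

From Stdlib Require Import Lra Classical.
From mathcomp Require Import zify all_boot.
From mathcomp Require Import Rstruct.
From Stdlib Require Import Reals.
Set Implicit Arguments. Unset Strict Implicit.

(* Call a graph K-good if it has at most K edges between {1..r} and the rest,
   no edge inside {1..r}, and no outer vertex with two neighbours in {1..r};
   the events B_0, ..., B_K partition the K-good graphs.  A first-moment
   (union bound / Markov) computation bounds the probability of not being
   K-good by  r^2 p + r^2 n p^2 + 2rnp/(K+1),  which for p <= C/n is below
   any delta > 0 once K and n are large.  For such n, if Pr[X] > beta and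
   Pr[A | X] > alpha, an averaging argument over the partition gives some
   i <= K with Pr[A | B_i /\ X] > alpha - eps.  Since only K+1 values of i
   are possible, one of them works for infinitely many n in S (pigeonhole). *)

Local Open Scope R_scope.

Definition indb (b : bool) : R := if b then 1 else 0.

Lemma indb_ge0 (b : bool) : 0 <= indb b.
Proof. by rewrite /indb; case: b; lra. Qed.

Lemma indbM (a b : bool) : indb (a && b) = indb a * indb b.
Proof. by rewrite /indb; case: a; case: b => /=; ring. Qed.

Lemma sum_const (T : finType) (A : {pred T}) (c : R) :
  \big[Rplus/0]_(x in A) c = INR #|A| * c.
Proof. rewrite big_const; elim: #|A| => [/=|k IH]; [ring | rewrite iterS IH S_INR; ring]. Qed.

Lemma prod_const (T : finType) (A : {pred T}) (c : R) :
  \big[Rmult/1]_(x in A) c = c ^ #|A|.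
Proof. by rewrite big_const; elim: #|A| => //= k ->. Qed.

Lemma sum_ge0 (T : finType) (P : pred T) (f : T -> R) :
  (forall x, 0 <= f x) -> 0 <= \big[Rplus/0]_(x | P x) f x.
Proof. by move=> f0; apply: (big_ind (fun x => 0 <= x)) => //; [lra | move=> *; lra]. Qed.

Lemma sum_indb_ge1 (T : finType) (A : {pred T}) (b : pred T) (t : T) :
  t \in A -> b t -> 1 <= \big[Rplus/0]_(x in A) indb (b x).
Proof.
move=> tA bt; rewrite (bigD1 t) //=.
have -> : indb (b t) = 1 by rewrite /indb bt.
have := @sum_ge0 _ (fun x => (x \in A) && (x != t)) (fun x => indb (b x)) (fun x => indb_ge0 _).
lra.
Qed.

Lemma sum_indb_card (T : finType) (A B : {pred T}) :
  \big[Rplus/0]_(x in A) indb (x \in B) = INR #|[predI A & B]|.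
Proof.
rewrite -[RHS]Rmult_1_r -sum_const [RHS]big_mkcond [LHS]big_mkcond /=.
by apply: eq_bigr => x _; rewrite /indb inE; case: (x \in A); case: (x \in B).
Qed.

Section Expectation.
Variables (n : nat) (p : R).
Hypothesis p01 : 0 <= p <= 1.

Definition Ex (f : graph n -> R) : R :=
  \big[Rplus/0]_(G : graph n | G \subset Kn n) (gnp_weight p G * f G).

Lemma gnp_weight_ge0 (G : graph n) : 0 <= gnp_weight p G.
Proof. by rewrite /gnp_weight; apply: Rmult_le_pos; apply: pow_le; lra. Qed.

Lemma PrE (E : graph n -> bool) : Pr p E = Ex (fun G => indb (E G)).
Proof.
rewrite /Pr /Ex big_mkcondr /=.
by apply: eq_bigr => G _; rewrite /indb; case: (E G); ring.
Qed.

Lemma Ex_ext (f g : graph n -> R) : (forall G : graph n, f G = g G) -> Ex f = Ex g.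
Proof. by move=> fg; apply: eq_bigr => G _; rewrite fg. Qed.

Lemma Ex_le (f g : graph n -> R) :
  (forall G : graph n, G \subset Kn n -> f G <= g G) -> Ex f <= Ex g.
Proof.
move=> fg; apply: (big_ind2 (fun x y => x <= y)); [lra | move=> *; lra |].
by move=> G GK; apply: Rmult_le_compat_l; [exact: gnp_weight_ge0 | exact: fg].
Qed.

Lemma Ex_add (f g : graph n -> R) : Ex (fun G => f G + g G) = Ex f + Ex g.
Proof. by rewrite /Ex -big_split /=; apply: eq_bigr => G _; ring. Qed.

Lemma Ex_scale (c : R) (f : graph n -> R) : Ex (fun G => c * f G) = c * Ex f.
Proof. by rewrite /Ex big_distrr /=; apply: eq_bigr => G _; ring. Qed.

Lemma Ex_sum (T : finType) (P : pred T) (f : T -> graph n -> R) :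
  Ex (fun G => \big[Rplus/0]_(t | P t) f t G) = \big[Rplus/0]_(t | P t) Ex (f t).
Proof. by rewrite /Ex exchange_big /=; apply: eq_bigr => G _; rewrite big_distrr. Qed.

Lemma Pr_ge0 (E : graph n -> bool) : 0 <= Pr p E.
Proof.
rewrite PrE /Ex; apply: sum_ge0 => G.
by apply: Rmult_le_pos; [apply: gnp_weight_ge0 | apply: indb_ge0].
Qed.

Lemma Pr_le (E F : graph n -> bool) : (forall G : graph n, E G -> F G) -> Pr p E <= Pr p F.
Proof.
move=> EF; rewrite !PrE; apply: Ex_le => G _; rewrite /indb.
by case EG: (E G); [rewrite EF //; lra | case: (F G); lra].
Qed.

Lemma Pr_ext (E F : graph n -> bool) : (forall G, E G = F G) -> Pr p E = Pr p F.
Proof. by move=> EF; apply: eq_bigl => G; rewrite EF. Qed.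

Lemma Pr_split (E F : graph n -> bool) :
  Pr p E <= Pr p (andE F E) + Pr p (fun G => ~~ F G).
Proof.
rewrite !PrE -Ex_add; apply: Ex_le => // G _; rewrite /andE /indb.
by case: (E G); case: (F G) => /=; lra.
Qed.

(* Expanding  p^|F| = prod_e (p + (1-p)), restricted to the edges of K_n and
   with the factor (1-p) suppressed on F: the term selecting the edge set J
   is the weight of J when F is contained in J and J in K_n, and 0 otherwise. *)
Let present (e : 'I_n * 'I_n) : R := if e \in Kn n then p else 0.
Let absent (F : graph n) (e : 'I_n * 'I_n) : R :=
  if e \in Kn n then (if e \in F then 0 else 1 - p) else 1.

Lemma selected_term (F J : graph n) : F \subset Kn n ->
  \big[Rmult/1]_e (if e \in J then present e else absent F e)
  = if J \subset Kn n then gnp_weight p J * indb (F \subset J) else 0.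
Proof.
move=> FK; case: (boolP (J \subset Kn n)) => JK; last first.
  case/subsetPn: JK => e eJ eK.
  by rewrite (bigD1 e) //= eJ /present ifN // Rmult_0_l.
case: (boolP (F \subset J)) => FJ; last first.
  case/subsetPn: FJ => e eF eJ.
  rewrite (bigD1 e) //= ifN // /absent (subsetP FK) // eF /indb.
  by rewrite Rmult_0_l Rmult_0_r.
rewrite /indb Rmult_1_r /gnp_weight.
transitivity (\big[Rmult/1]_e
  ((if e \in J then p else 1) * (if e \in Kn n :\: J then 1 - p else 1))).
  apply: eq_bigr => e _; rewrite /present /absent in_setD.
  case: (boolP (e \in J)) => eJ /=; first by rewrite (subsetP JK) // Rmult_1_r.
  rewrite Rmult_1_l; case: ifP => // _.
  by rewrite ifN //; apply: contra eJ; apply: (subsetP FJ).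
rewrite big_split /= -!big_mkcond /= !prod_const cardsD.
by rewrite (setIidPr JK).
Qed.

Lemma Ex_subset (F : graph n) :
  F \subset Kn n -> Ex (fun G => indb (F \subset G)) = p ^ #|F|.
Proof.
move=> FK.
have factor : \big[Rmult/1]_e (present e + absent F e) = p ^ #|F|.
  rewrite -prod_const [RHS]big_mkcond /=; apply: eq_bigr => e _.
  rewrite /present /absent; case: ifP => eK; case: ifP => eF; try ring.
  by move: eK; rewrite (subsetP FK).
rewrite -factor bigA_distr [LHS]big_mkcond /=; apply: eq_bigr => J _.
by rewrite selected_term.
Qed.

Lemma Ex_edge (e : 'I_n * 'I_n) : e \in Kn n -> Ex (fun G => indb (e \in G)) = p.
Proof.
move=> eK; rewrite (Ex_ext (g := fun G => indb ([set e] \subset G))); last first.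
  by move=> G; rewrite sub1set.
by rewrite Ex_subset ?sub1set // cards1 /=; ring.
Qed.

End Expectation.

Section Attachment.
Variables (r n : nat).

Definition crossing (G : graph n) : {set 'I_n * 'I_n} :=
  [set e in G | low r e.1 != low r e.2].
Definition no_low_edge (G : graph n) : bool :=
  [forall e in G, ~~ (low r e.1 && low r e.2)].
Definition single_attachment (G : graph n) : bool :=
  [forall v : 'I_n, ~~ low r v ==> (#|[set u : 'I_n | low r u && adj G u v]| <= 1)%nat].

(* G is K-good iff it lies in one of the events B_0, ..., B_K. *)
Definition good (K : nat) (G : graph n) : bool :=
  [&& (#|crossing G| <= K)%nat, no_low_edge G & single_attachment G].

Lemma sum_indb_eq (c K : nat) :
  \big[Rplus/0]_(i < K.+1) indb (c == i) = indb (c <= K)%nat.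
Proof.
elim: K => [|K IH]; first by rewrite big_ord_recr big_ord0 /= Rplus_0_l; case: c.
rewrite big_ord_recr /= IH /indb.
have [cK | cK | ->] := ltngtP c K.+1.
- by rewrite -ltnS cK; ring.
- by rewrite leqNgt (ltnW cK) /=; ring.
- by rewrite ltnn; ring.
Qed.

Lemma sum_B_good (K : nat) (G : graph n) :
  \big[Rplus/0]_(i < K.+1) indb (B r i G) = indb (good K G).
Proof.
rewrite /good indbM -sum_indb_eq big_distrl /=.
by apply: eq_bigr => i _; rewrite -indbM.
Qed.

End Attachment.

Section Witnesses.
Variables (r n : nat).

Definition low_vertices : {set 'I_n} := [set v | low r v].
Definition low_pairs : {set 'I_n * 'I_n} := [set e in Kn n | low r e.1 && low r e.2].
Definition cross_pairs : {set 'I_n * 'I_n} := [set e in Kn n | low r e.1 != low r e.2].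
Definition cherries : {set ('I_n * 'I_n) * 'I_n} :=
  [set t | [&& low r t.1.1, low r t.1.2, (t.1.1 < t.1.2)%nat & ~~ low r t.2]].
Definition cherry_edges (t : ('I_n * 'I_n) * 'I_n) : graph n :=
  [set (t.1.1, t.2); (t.1.2, t.2)].

Lemma card_low_vertices : (#|low_vertices| <= r)%nat.
Proof.
rewrite cardE -(size_map val) -[X in (_ <= X)%nat](size_iota 0 r).
apply: uniq_leq_size; first by rewrite map_inj_uniq ?enum_uniq //; exact: val_inj.
by move=> x /mapP [y]; rewrite mem_enum inE /low => yr ->; rewrite mem_iota.
Qed.

Lemma card_low_pairs : (#|low_pairs| <= r * r)%nat.
Proof.
apply: (@leq_trans #|setX low_vertices low_vertices|); last first.
  by rewrite cardsX leq_mul // card_low_vertices.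
by apply: subset_leq_card; apply/subsetP => -[a b]; rewrite !inE /= => /andP [_ /andP [-> ->]].
Qed.

Lemma card_cherries : (#|cherries| <= r * r * n)%nat.
Proof.
apply: (@leq_trans #|setX (setX low_vertices low_vertices) [set: 'I_n]|); last first.
  by rewrite !cardsX cardsT card_ord !leq_mul // card_low_vertices.
apply: subset_leq_card; apply/subsetP => -[[a b] c]; rewrite !inE /=.
by case/and4P => -> -> _ _.
Qed.

Lemma card_cross_pairs : (#|cross_pairs| <= 2 * r * n)%nat.
Proof.
apply: (@leq_trans #|setX low_vertices [set: 'I_n] :|: setX [set: 'I_n] low_vertices|).
  apply: subset_leq_card; apply/subsetP => -[a b]; rewrite !inE /=.
  by case/andP => _; case: (low r a); case: (low r b).
apply: leq_trans (leq_card_setU _ _) _.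
rewrite !cardsX cardsT card_ord.
have := card_low_vertices; nia.
Qed.

Lemma cherry_edges_sub (t : ('I_n * 'I_n) * 'I_n) :
  t \in cherries -> cherry_edges t \subset Kn n.
Proof.
case: t => [[a b] c]; rewrite !inE /= /low => /and4P [ar br ab cr].
by apply/subsetP => e; rewrite !inE => /orP [] /eqP -> /=; lia.
Qed.

Lemma card_cherry_edges (t : ('I_n * 'I_n) * 'I_n) :
  t \in cherries -> #|cherry_edges t| = 2%nat.
Proof.
case: t => [[a b] c]; rewrite !inE /= => /and4P [_ _ ab _].
by rewrite cards2; case: eqP => // -[ac]; move: ab; rewrite ac ltnn.
Qed.

Variable G : graph n.
Hypothesis GK : G \subset Kn n.

Lemma crossing_pairs : #|crossing r G| = #|[predI cross_pairs & mem G]|.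
Proof.
apply: eq_card => e; rewrite !inE.
case eG: (e \in G) => /=; last by rewrite andbF.
by have := subsetP GK e eG; rewrite inE => ->; rewrite andbT.
Qed.

Lemma low_edge_witness :
  ~~ no_low_edge r G -> exists2 e, e \in low_pairs & e \in G.
Proof.
case/forallPn => e; rewrite negb_imply negbK => /andP [eG el].
by exists e; rewrite // inE (subsetP GK) // el.
Qed.

Lemma cherry_witness :
  ~~ single_attachment r G -> exists2 t, t \in cherries & cherry_edges t \subset G.
Proof.
have low_edge u v : low r u -> ~~ low r v -> adj G u v -> (u, v) \in G.
  move=> lu lv /orP [] // vu; have := subsetP GK _ vu; rewrite inE /=.
  by move: lu lv; rewrite /low; lia.
case/forallPn => v; rewrite negb_imply -ltnNge => /andP [lv /card_gt1P [u1 [u2 []]]].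
rewrite !inE => /andP [l1 a1] /andP [l2 a2] u12.
have [g1 g2] := (low_edge _ _ l1 lv a1, low_edge _ _ l2 lv a2).
have [lt12 | lt21 | eq12] := ltngtP u1 u2.
- exists ((u1, u2), v); first by rewrite inE /= l1 l2 lt12 lv.
  by apply/subsetP => e; rewrite !inE => /orP [] /eqP ->.
- exists ((u2, u1), v); first by rewrite inE /= l1 l2 lt21 lv.
  by apply/subsetP => e; rewrite !inE => /orP [] /eqP ->.
- by move: u12; rewrite (val_inj eq12) eqxx.
Qed.

End Witnesses.

(* First moment: a graph that is not K-good contains an edge inside {1..r},
   or a cherry, or more than K crossing edges; weighting the crossing edges
   by 1/(K+1) (Markov), the expected number of such witnesses bounds the
   probability of not being K-good. *)
Section FirstMoment.
Variables (r n : nat) (p : R).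
Hypothesis p01 : 0 <= p <= 1.

Definition bad_count (K : nat) (G : graph n) : R :=
  \big[Rplus/0]_(e in low_pairs r n) indb (e \in G)
  + \big[Rplus/0]_(t in cherries r n) indb (cherry_edges t \subset G)
  + / INR K.+1 * \big[Rplus/0]_(e in cross_pairs r n) indb (e \in G).

Lemma not_good_le_bad_count (K : nat) (G : graph n) :
  G \subset Kn n -> indb (~~ good r K G) <= bad_count K G.
Proof.
move=> GK; rewrite /bad_count.
set S1 := \big[Rplus/0]_(e in _) _; set S2 := \big[Rplus/0]_(t in _) _.
set S3 := \big[Rplus/0]_(e in cross_pairs r n) _; set iK := / INR K.+1.
have S1_ge0 : 0 <= S1 by apply: sum_ge0 => e; apply: indb_ge0.
have S2_ge0 : 0 <= S2 by apply: sum_ge0 => t; apply: indb_ge0.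
have invK_gt0 : 0 < iK by apply: Rinv_0_lt_compat; apply: lt_0_INR; lia.
have S3_ge0 : 0 <= iK * S3.
  by apply: Rmult_le_pos; [lra | apply: sum_ge0 => e; apply: indb_ge0].
rewrite /good; case: (boolP (#|crossing r G| <= K)%nat) => hK /=; last first.
  have cross_ge : INR K.+1 <= S3.
    by rewrite /S3 sum_indb_card -crossing_pairs //; apply: le_INR; lia.
  have : 1 <= iK * S3.
    rewrite -(Rinv_l (INR K.+1)) -/iK; last by apply: not_0_INR.
    by apply: Rmult_le_compat_l; lra.
  rewrite /indb; lra.
case: (boolP (no_low_edge r G)) => lowfree /=; last first.
  have [e eL eG] := low_edge_witness GK lowfree.
  have : 1 <= S1 by apply: (sum_indb_ge1 eL).
  rewrite /indb; lra.
case: (boolP (single_attachment r G)) => attached /=; first by rewrite /indb; lra.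
have [t tC tG] := cherry_witness GK attached.
have : 1 <= S2 by apply: (sum_indb_ge1 (b := fun t => cherry_edges t \subset G) tC).
rewrite /indb; lra.
Qed.

Lemma Ex_bad_count (K : nat) :
  Ex p (bad_count K) = INR #|low_pairs r n| * p + INR #|cherries r n| * p ^ 2
                       + / INR K.+1 * (INR #|cross_pairs r n| * p).
Proof.
rewrite /bad_count !Ex_add Ex_scale !Ex_sum -!sum_const.
congr (_ + _ + _ * _); apply: eq_bigr.
- by move=> e; rewrite /low_pairs inE => /andP [eK _]; rewrite (Ex_edge _ eK).
- move=> t tC; rewrite Ex_subset; last exact: cherry_edges_sub tC.
  by congr (p ^ _); apply: card_cherry_edges tC.
- by move=> e; rewrite /cross_pairs inE => /andP [eK _]; rewrite (Ex_edge _ eK).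
Qed.

Lemma Pr_not_good_le (K : nat) :
  Pr p (fun G : graph n => ~~ good r K G)
  <= INR r * INR r * p + INR r * INR r * INR n * p ^ 2
     + / INR K.+1 * (2 * INR r * INR n * p).
Proof.
rewrite PrE; apply: Rle_trans (Ex_le p01 (fun G GK => not_good_le_bad_count K GK)) _.
rewrite Ex_bad_count.
have p0 : 0 <= p by lra.
have invK_gt0 : 0 < / INR K.+1 by apply: Rinv_0_lt_compat; apply: lt_0_INR; lia.
have c1 : INR #|low_pairs r n| <= INR r * INR r.
  by rewrite -mult_INR; apply: le_INR; apply/leP; apply: card_low_pairs.
have c2 : INR #|cherries r n| <= INR r * INR r * INR n.
  by rewrite -!mult_INR; apply: le_INR; apply/leP; apply: card_cherries.
have c3 : INR #|cross_pairs r n| <= 2 * INR r * INR n.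
  by rewrite -(INR_IZR_INZ 2) -!mult_INR; apply: le_INR; apply/leP; apply: card_cross_pairs.
have p2 : 0 <= p ^ 2 by apply: pow_le.
apply: Rplus_le_compat; [apply: Rplus_le_compat |]; try apply: Rmult_le_compat_r => //.
apply: Rmult_le_compat_l; [lra | exact: Rmult_le_compat_r].
Qed.

End FirstMoment.

(* Arithmetic behind the first-moment bound: with x = n and p n <= C, the
   first two terms are O(1/n) and the Markov term is O(1/K). *)
Lemma first_moment_small (Rr x p C k delta : R) :
  0 <= p -> 0 < x -> p * x <= C -> 0 <= Rr -> 0 < k ->
  4 * Rr * C <= delta * k -> 2 * (Rr * Rr * C + Rr * Rr * C * C) <= delta * x ->
  Rr * Rr * p + Rr * Rr * x * p ^ 2 + / k * (2 * Rr * x * p) <= delta.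
Proof.
move=> p0 x0 pxC Rr0 k0 hk hx.
have px0 : 0 <= p * x by nra.
have RR0 : 0 <= Rr * Rr by nra.
have sq : (p * x) * (p * x) <= C * C by nra.
have small_n : (Rr * Rr * p + Rr * Rr * x * p ^ 2) * x <= delta / 2 * x.
  have -> : (Rr * Rr * p + Rr * Rr * x * p ^ 2) * x
            = Rr * Rr * (p * x) + Rr * Rr * ((p * x) * (p * x)) by ring.
  have := Rmult_le_compat_l _ _ _ RR0 pxC; have := Rmult_le_compat_l _ _ _ RR0 sq.
  lra.
have small_K : / k * (2 * Rr * x * p) * k <= delta / 2 * k.
  have -> : / k * (2 * Rr * x * p) * k = 2 * Rr * (p * x) by field; lra.
  have := Rmult_le_compat_l _ _ _ (Rmult_le_pos _ _ (Rlt_le _ _ Rlt_0_2) Rr0) pxC.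
  lra.
have := Rmult_le_reg_r _ _ _ x0 small_n; have := Rmult_le_reg_r _ _ _ k0 small_K.
lra.
Qed.

Lemma le_mul_of_div_le (a d y : R) : 0 < d -> a / d <= y -> a <= d * y.
Proof.
move=> d0 /(Rmult_le_compat_l _ _ _ (Rlt_le _ _ d0)).
by have -> : d * (a / d) = a by field; lra.
Qed.

Lemma not_good_rare (r : nat) (p : nat -> R) (C : R) (N : nat) (delta : R) :
  (forall n, 0 <= p n <= 1) -> (forall n, (N <= n)%nat -> p n <= C / INR n) ->
  0 < delta ->
  exists K M : nat, forall n, (M <= n)%nat ->
    Pr (p n) (fun G : graph n => ~~ good r K G) <= delta.
Proof.
move=> p01 pC d0.
have [K hK] := INR_unbounded (4 * INR r * C / delta).
have [M hM] := INR_unbounded (2 * (INR r * INR r * C + INR r * INR r * C * C) / delta).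
exists K, (maxn M (maxn N 1)) => n hn.
have n0 : 0 < INR n by apply: lt_0_INR; lia.
apply: Rle_trans (@Pr_not_good_le r n (p n) (p01 n) K) _.
apply: (@first_moment_small _ _ _ C) => //; first by have := p01 n; lra.
- have -> : C = C / INR n * INR n by field; lra.
  by apply: Rmult_le_compat_r; [lra | apply: pC; lia].
- apply: pos_INR.
- apply: lt_0_INR; lia.
- apply: le_mul_of_div_le => //.
  have : INR K <= INR K.+1 by apply: le_INR; lia.
  lra.
- apply: le_mul_of_div_le => //.
  have : INR M <= INR n by apply: le_INR; lia.
  lra.
Qed.

Lemma ratio_witness (M : nat) (c : R) (q a : nat -> R) :
  (forall i, 0 <= a i <= q i) ->
  c * \big[Rplus/0]_(i < M) q i < \big[Rplus/0]_(i < M) a i ->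
  exists2 i, (i < M)%nat & 0 < q i /\ c < a i / q i.
Proof.
move=> aq; rewrite big_distrr /= -(big_mkord xpredT (fun i => c * q i)) -(big_mkord xpredT a).
elim: M => [|M IH]; first by rewrite !big_geq // => /Rlt_irrefl.
rewrite !big_nat_recr //= => hsum.
have [lt_M | ge_M] := Rlt_or_le (c * q M) (a M).
- have qM : 0 < q M.
    have [aM0 aMq] := aq M; case: (Rle_or_lt (q M) 0) => // qM0.
    have qMz : q M = 0 by lra.
    by rewrite qMz Rmult_0_r in lt_M; lra.
  exists M => //; split => //.
  by apply: (Rmult_lt_reg_r (q M)) => //; rewrite /Rdiv Rmult_assoc Rinv_l; lra.
- by have [|i iM hi] := IH; [lra | exists i => //; apply: ltnW].
Qed.

Section Averaging.
Variables (n : nat) (p : R).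
Hypothesis p01 : 0 <= p <= 1.

Variables (U : graph n -> bool) (Bs : nat -> graph n -> bool) (K : nat).
(* The events Bs 0, ..., Bs K partition the event U. *)
Hypothesis Bs_partition : forall G, \big[Rplus/0]_(i < K.+1) indb (Bs i G) = indb (U G).

Lemma sum_Pr_partition (Y : graph n -> bool) :
  \big[Rplus/0]_(i < K.+1) Pr p (andE (Bs i) Y) = Pr p (andE U Y).
Proof.
under eq_bigr do rewrite PrE.
rewrite PrE -Ex_sum; apply: Ex_ext => G; rewrite /andE indbM -Bs_partition big_distrl /=.
by apply: eq_bigr => i _; rewrite indbM.
Qed.

Lemma partition_average (A X : graph n -> bool) (alpha beta eps delta : R) :
  0 < alpha -> 0 < eps ->
  Pr p (fun G => ~~ U G) <= delta -> delta * (1 + eps) < eps * beta ->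
  Pr p X > beta -> CPr p A X > alpha ->
  exists i, (i <= K)%nat /\ Pr p (andE (Bs i) X) > 0 /\
            CPr p A (andE (Bs i) X) > alpha - eps.
Proof.
move=> a0 e0 rare hdelta hX hAX.
have d0 : 0 <= delta by apply: Rle_trans rare; apply: Pr_ge0.
have PX0 : 0 < Pr p X by nra.
have lower_AX : alpha * Pr p X < Pr p (andE A X).
  move: hAX; rewrite /CPr => /(Rmult_lt_compat_r _ _ _ PX0).
  by rewrite /Rdiv Rmult_assoc Rinv_l; lra.
have UX_le : Pr p (andE U X) <= Pr p X by apply: Pr_le => // G /andP [].
have X_le := Pr_split p01 X U; have AX_le := Pr_split p01 (andE A X) U.
have sum_AX : \big[Rplus/0]_(i < K.+1) Pr p (andE A (andE (Bs i) X))
              = Pr p (andE U (andE A X)).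
  rewrite -sum_Pr_partition; apply: eq_bigr => i _; apply: Pr_ext => G.
  by rewrite /andE; case: (A G); case: (Bs i G).
have [i iK [q0 hi]] : exists2 i, (i < K.+1)%nat &
    0 < Pr p (andE (Bs i) X) /\ alpha - eps < CPr p A (andE (Bs i) X).
  apply: ratio_witness => [i|]; first by split; [apply: Pr_ge0 | apply: Pr_le => // G /andP []].
  rewrite sum_Pr_partition sum_AX; nra.
by exists i.
Qed.

End Averaging.

Lemma infinitely_often_pigeonhole (K : nat) (Q : nat -> nat -> Prop) :
  (forall m, exists n, (m <= n)%nat /\ exists i, (i <= K)%nat /\ Q i n) ->
  exists i, forall m, exists n, (m <= n)%nat /\ Q i n.
Proof.
elim: K Q => [|K IH] Q often.
  exists 0%nat => m; have [n [mn [i [iK Qi]]]] := often m.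
  by exists n; split => //; have <- : i = 0%nat by lia.
case: (classic (forall m, exists n, (m <= n)%nat /\ Q K.+1 n)) => [top | not_top].
  by exists K.+1.
have [m0 hm0] : exists m0, forall n, (m0 <= n)%nat -> ~ Q K.+1 n.
  apply: NNPP => hn; apply: not_top => m.
  apply: NNPP => hm; apply: hn; exists m => n mn Qn; apply: hm; by exists n.
apply: IH => m; have [n [mn [i [iK Qi]]]] := often (maxn m m0).
exists n; split; first lia.
exists i; split => //.
have [|iK1|eiK1] := ltngtP i K.+1; [lia | lia |].
by subst i; case: (hm0 n) => //; lia.
Qed.

Local Close Scope R_scope.

Theorem mainTheorem3
  (alpha beta eps : R) (r : nat) (S : nat -> Prop) (A X : event) (p : nat -> R) :
  (0 < alpha)%R -> (0 < beta)%R -> (0 < eps)%R ->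
  infinite_set S ->
  (forall n : nat, (0 <= p n <= 1)%R) ->
  Theta_inv_n p ->
  (forall n : nat, S n -> (Pr (p n) (X n) > beta)%R /\ (CPr (p n) (A n) (X n) > alpha)%R) ->
  exists i : nat, forall m : nat, exists n : nat,
    (m <= n)%N /\ S n /\
    (Pr (p n) (andE (B r i (n:=n)) (X n)) > 0)%R /\
    (CPr (p n) (A n) (andE (B r i (n:=n)) (X n)) > alpha - eps)%R.
Proof.
(* only the upper bound p n <= C / n of p = Theta(1/n) is needed *)
move=> a0 b0 e0 infS p01 [c [C [_ [_ [N hN]]]]] hS.
pose delta := (eps * beta / (2 * (1 + eps)))%R.
have d0 : (0 < delta)%R.
  by apply: Rmult_lt_0_compat; [nra | apply: Rinv_0_lt_compat; lra].
have hdelta : (delta * (1 + eps) < eps * beta)%R.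
  by rewrite (_ : delta * (1 + eps) = eps * beta / 2)%R; [nra | rewrite /delta; field; lra].
have pC n : (N <= n)%nat -> (p n <= C / INR n)%R by move=> /hN [].
have [K [M rare]] := not_good_rare r p01 pC d0.
apply: (@infinitely_often_pigeonhole K) => m.
have [n [mn Sn]] := infS (maxn m M).
have [hX hAX] := hS n Sn.
have rare_n := rare n (leq_trans (leq_maxr m M) mn).
have [i [iK hi]] := @partition_average n (p n) (p01 n) _ (fun i => B r i (n:=n)) K
                      (@sum_B_good r n K) _ _ _ _ _ _ a0 e0 rare_n hdelta hX hAX.
by exists n; split; [lia | exists i].
Qed.
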